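(* Let $g:[0,1]\to[0,\infty)$, let $G_0(X^n,P)=\sum_{x\in\mathcal{X}}g(p_x)\,I(F_x(X^n)=0)$ and $L_{G_0}(\lambda)=\log E\big[e^{\lambda(G_0-E[G_0])}\big]$. Then for all $\lambda>0$, $$L_{G_0}(\lambda)\le\sum_{r=2}^{\infty}\frac{\lambda^r}{r!}\,u^*_r(n,g),\qquad u^*_r(n,g)=\max_{0<p<1}g(p)^r(1-p)^n\frac{1-(1-p)^n}{p}.$$
   Context: $P$ is a discrete probability distribution on a countable alphabet $\mathcal{X}$, $p_x=P(x)$, and $X^n=(X_1,\ldots,X_n)$ are i.i.d. samples from $P$. $F_x(X^n)=\sum_{i=1}^n I(X_i=x)$ is the number of occurrences of $x$ in $X^n$, and $I(\cdot)$ is the indicator. *)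

From HB Require Import structures.
From mathcomp Require Import all_boot all_order all_algebra.
From mathcomp Require Import all_classical all_reals all_analysis.
Set Implicit Arguments. Unset Strict Implicit. Unset Printing Implicit Defensive.
Import Order.TTheory GRing.Theory Num.Theory.
Local Open Scope classical_set_scope.
Local Open Scope ring_scope.

Section Defs.
Variables (R : realType) (T : countType).

Definition seqprob (p : T -> R) (n : nat) (s : n.-tuple T) : R :=
  \prod_(i <- s) p i.

Definition occ (n : nat) (s : n.-tuple T) (x : T) : nat := count_mem x s.

Definition G0 (g : R -> R) (p : T -> R) (n : nat) (s : n.-tuple T) : \bar R :=
  (\esum_(x in setT) (g (p x) * (occ s x == 0%N)%:R)%:E)%E.

(* expectation E[f(X^n)] of a [0,+oo]-valued (or a.s. finite) statistic *)
Definition Exp (p : T -> R) (n : nat) (f : n.-tuple T -> \bar R) : \bar R :=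
  (\esum_(s in setT) (seqprob p s)%:E * f s)%E.

Definition LG0 (g : R -> R) (p : T -> R) (n : nat) (lam : R) : \bar R :=
  lne (Exp p (fun s => expeR (lam%:E * (@G0 g p n s - Exp p (@G0 g p n)))%E)).

Definition ustar (r n : nat) (g : R -> R) : \bar R :=
  ereal_sup [set ((g q) ^+ r * (1 - q) ^+ n * (1 - (1 - q) ^+ n) / q)%:E
            | q in `]0, 1[%classic].
End Defs.
Arguments G0 {R T} g p n s.

From HB Require Import structures.
From mathcomp Require Import all_boot all_order all_algebra.
From mathcomp Require Import all_classical all_reals all_analysis.
From mathcomp Require Import ring lra.
Import Order.TTheory GRing.Theory Num.Theory.
Import numFieldNormedType.Exports.
Local Open Scope classical_set_scope.
Local Open Scope ring_scope.

(* Write mu_x = (1 - p_x)^n = P(F_x = 0) and c_x = e^(lam g(p_x)) - 1.  Up to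
   an error lam * sum_(x \notin F) g(p_x), which can be made arbitrarily small
   because E[G_0] < oo, G_0 may be replaced by its restriction to a finite set
   F of symbols, and then e^(lam G_0) = prod_(x in F) (1 + c_x I(F_x = 0)).
   The indicators I(F_x = 0) are negatively associated: conditioning on the
   first sample shows E prod_x (1 + c_x I(F_x = 0)) <= prod_x (1 + c_x mu_x).
   Each factor then contributes at most the log-moment generating function of
   a centred Bernoulli(mu_x) variable, bounded by
   mu_x (1 - mu_x) (e^(lam g) - 1 - lam g).  Expanding the latter in powers of
   lam and using g(p)^r mu (1 - mu) <= p u*_r together with sum_x p_x <= 1
   gives the series of the statement. *)

Section exponential_inequalities.
Context {R : realType}.
Implicit Types (t mu : R).

Definition expR_rem2 t : R := expR t - 1 - t.

Lemma cvg_expR_rem2 t :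
  (\sum_(2 <= k < N) exp_coeff t k) @[N --> \oo] --> expR_rem2 t.
Proof.
have : (series (exp_coeff t) N - 1 - t) @[N --> \oo] --> expR_rem2 t.
  apply: cvgB; [apply: cvgB|]; [exact: is_cvg_series_exp_coeff|exact: cvg_cst..].
apply: cvg_trans; apply: near_eq_cvg; near=> N.
have N2 : (2 <= N)%N by near: N; exists 2%N.
rewrite /series /= (@big_cat_nat _ _ _ 2) //= (big_ltn (isT : (0 < 2)%N)).
rewrite (big_ltn (isT : (1 < 2)%N)) big_geq // /exp_coeff /= expr0 expr1 !divr1.
by ring.
Unshelve. all: by end_near. Qed.

Lemma exp_coeff_mix_le t mu k : 0 <= t -> 0 <= mu <= 1 -> (2 <= k)%N ->
  mu * exp_coeff (t * (1 - mu)) k + (1 - mu) * exp_coeff (- (t * mu)) k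
  <= mu * (1 - mu) * exp_coeff t k.
Proof.
move=> t0 /andP[mu0 mu1]; case: k => [|[|j]] // _.
have mu'0 : 0 <= 1 - mu by rewrite subr_ge0.
have powers_le1 : (1 - mu) ^+ j.+1 - (- mu) ^+ j.+1 <= 1.
  have : (1 - mu) ^+ j.+1 <= 1 - mu by rewrite exprS ler_piMr ?exprn_ile1 //; lra.
  have : - (- mu) ^+ j.+1 <= mu.
    rewrite (le_trans (ler_norm _)) // normrN normrX normrN ger0_norm //.
    by rewrite exprS ler_piMr ?exprn_ile1.
  lra.
have -> : mu * exp_coeff (t * (1 - mu)) j.+2 + (1 - mu) * exp_coeff (- (t * mu)) j.+2
    = mu * (1 - mu) * exp_coeff t j.+2 * ((1 - mu) ^+ j.+1 - (- mu) ^+ j.+1).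
  rewrite /exp_coeff /= exprNn [(- mu) ^+ _]exprNn !exprMn !exprS; ring.
have coeff_ge0 : 0 <= exp_coeff t j.+2 by exact: exp_coeff_ge0.
by rewrite ler_piMr // mulr_ge0 // mulr_ge0.
Qed.

Lemma expR_rem2_mix_le t mu : 0 <= t -> 0 <= mu <= 1 ->
  mu * expR_rem2 (t * (1 - mu)) + (1 - mu) * expR_rem2 (- (t * mu))
  <= mu * (1 - mu) * expR_rem2 t.
Proof.
move=> t0 mu01; pose S (x : R) N := \sum_(2 <= k < N) exp_coeff x k.
have lhs : (mu * S (t * (1 - mu)) N + (1 - mu) * S (- (t * mu)) N) @[N --> \oo] -->
    mu * expR_rem2 (t * (1 - mu)) + (1 - mu) * expR_rem2 (- (t * mu)).
  by apply: cvgD; apply: cvgMl_tmp; exact: cvg_expR_rem2.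
have rhs : (mu * (1 - mu) * S t N) @[N --> \oo] --> mu * (1 - mu) * expR_rem2 t.
  by apply: cvgMl_tmp; exact: cvg_expR_rem2.
apply: (ler_cvg_to lhs rhs); near=> N.
rewrite !mulr_sumr -big_split /=; apply: ler_sum_nat => k /andP[k2 _].
exact: exp_coeff_mix_le.
Unshelve. all: by end_near. Qed.

(* [ln (1 + (expR t - 1) * mu) - t * mu] is the log-moment generating function
   of a centred Bernoulli(mu) variable. *)
Lemma ln_mix_le t mu : 0 <= t -> 0 <= mu <= 1 ->
  ln (1 + (expR t - 1) * mu) <= t * mu + mu * (1 - mu) * expR_rem2 t.
Proof.
move=> t0 mu01; have /andP[mu0 mu1] := mu01.
have y_gt0 : 0 < 1 + (expR t - 1) * mu.
  by rewrite (lt_le_trans ltr01) // lerDl mulr_ge0 // subr_ge0 -expR0 ler_expR.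
set mix := mu * expR_rem2 (t * (1 - mu)) + (1 - mu) * expR_rem2 (- (t * mu)).
have y_mix : (1 + (expR t - 1) * mu) * expR (- (t * mu)) = 1 + mix.
  rewrite /mix /expR_rem2 (_ : expR (t * (1 - mu)) = expR t * expR (- (t * mu))).
    by ring.
  by rewrite -expRD mulrBr mulr1.
have mix_gt : -1 < mix.
  by have := mulr_gt0 y_gt0 (expR_gt0 (- (t * mu))); rewrite y_mix; lra.
have := le_ln1Dx mix_gt; rewrite -y_mix lnM ?posrE ?expR_gt0 // expRK.
have := expR_rem2_mix_le _ _ t0 mu01; rewrite -/mix; lra.
Qed.

End exponential_inequalities.

Section ustar_bounds.
Context {R : realType} (g : R -> R) (n : nat).
Hypothesis g_ge0 : forall q : R, 0 <= q <= 1 -> 0 <= g q.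

Lemma ustar_ge0 r : (0 <= ustar r n g)%E.
Proof.
have half01 : `]0, 1[%classic (1 / 2 : R) by rewrite /= in_itv /=; lra.
apply: le_trans (ereal_sup_ubound (ex_intro2 _ _ _ half01 erefl)).
have mu01 : 0 <= (1 - 1 / 2 : R) ^+ n <= 1.
  by apply/andP; split; [apply: exprn_ge0 | apply: exprn_ile1]; lra.
rewrite lee_fin !(divr_ge0, mulr_ge0) ?exprn_ge0 ?g_ge0 //; last lra.
- by apply/andP; split; lra.
- lra.
Qed.

Lemma ustar_ubound r q : 0 <= q <= 1 ->
  ((g q ^+ r * ((1 - q) ^+ n * (1 - (1 - q) ^+ n)))%:E <= q%:E * ustar r n g)%E.
Proof.
move=> /andP[q0 q1]; have [->|q_neq0] := eqVneq q 0.
  by rewrite subr0 expr1n subrr !mulr0 mul0e.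
have [->|q_neq1] := eqVneq q 1.
  rewrite subrr expr0n mul1e (_ : _ * (1 - _) = 0) ?mulr0 ?ustar_ge0 //.
  by case: (n == 0%N); rewrite ?subrr ?mulr0 ?mul0r.
have q_in : `]0, 1[%classic q.
  by rewrite /= in_itv /= !lt_neqAle q0 q1 q_neq1 eq_sym q_neq0.
apply: le_trans (lee_wpmul2l _ (ereal_sup_ubound (ex_intro2 _ _ _ q_in erefl))).
  by rewrite -EFinM lee_fin le_eqVlt; apply/orP; left; apply/eqP; field.
by rewrite lee_fin.
Qed.

Section finite_family.
Context {T : Type} (F : seq T) (q : T -> R).
Hypotheses (q01 : forall x, 0 <= q x <= 1) (sum_q_le1 : \sum_(x <- F) q x <= 1).

Lemma sum_ustar_le k :
  ((\sum_(x <- F) g (q x) ^+ k * ((1 - q x) ^+ n * (1 - (1 - q x) ^+ n)))%:E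
    <= ustar k n g)%E.
Proof.
rewrite -sumEFin; apply: le_trans (_ : \sum_(x <- F) (q x)%:E * ustar k n g <= _)%E.
  by apply: lee_sum => x _; exact: ustar_ubound.
rewrite -ge0_sume_distrl => [|x _]; last by rewrite lee_fin; case/andP: (q01 x).
by rewrite sumEFin gee_pMl ?ustar_ge0 // lee_fin.
Qed.

Lemma sum_var_expR_rem2_le (lam : R) : 0 < lam ->
  ((\sum_(x <- F) (1 - q x) ^+ n * (1 - (1 - q x) ^+ n) * expR_rem2 (lam * g (q x)))%:E
    <= \sum_(2 <= r <oo) ((lam ^+ r / r`!%:R)%:E * ustar r n g))%E.
Proof.
move=> lam0; set w := fun x => (1 - q x) ^+ n * (1 - (1 - q x) ^+ n).
set B := (\sum_(2 <= r <oo) _)%E.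
have B_terms_ge0 r : (0 <= (lam ^+ r / r`!%:R)%:E * ustar r n g)%E.
  by rewrite mule_ge0 ?ustar_ge0 // lee_fin divr_ge0 // exprn_ge0 // ltW.
pose v N := \sum_(x <- F) w x * \sum_(2 <= k < N) exp_coeff (lam * g (q x)) k.
have cvg_v : v N @[N --> \oo] --> \sum_(x <- F) w x * expR_rem2 (lam * g (q x)).
  apply: cvg_big => [|x _]; first exact: add_continuous.
  by apply: cvgMl_tmp; exact: cvg_expR_rem2.
have v_le N : ((v N)%:E <= B)%E.
  have -> : v N =
      \sum_(2 <= k < N) lam ^+ k / k`!%:R * \sum_(x <- F) g (q x) ^+ k * w x.
    rewrite /v; under eq_bigr => x _ do rewrite mulr_sumr.
    rewrite exchange_big /=; apply: eq_bigr => k _; rewrite mulr_sumr.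
    by apply: eq_bigr => x _; rewrite /exp_coeff /= exprMn; ring.
  apply: le_trans (nneseries_lim_ge N (fun r _ _ => B_terms_ge0 r)).
  rewrite -sumEFin; apply: lee_sum => k _; rewrite EFinM lee_wpmul2l //.
    by rewrite lee_fin divr_ge0 // exprn_ge0 // ltW.
  exact: sum_ustar_le.
have [->|B_fin] := eqVneq B +oo%E; first by rewrite leey.
have {}B_fin : B \is a fin_num by rewrite ge0_fin_numE ?ltey // nneseries_ge0.
rewrite -(fineK B_fin) lee_fin; apply: ler_cvg_to cvg_v (cvg_cst _) _.
by near=> N; rewrite -lee_fin fineK.
Unshelve. all: by end_near. Qed.

End finite_family.

End ustar_bounds.

Section esum_complements.
Local Open Scope ereal_scope.
Context {R : realType} {I : choiceType}.
Implicit Types f : I -> \bar R.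

Lemma esumZl (S : set I) (a : R) f :
  (0 <= a)%R -> (forall i, S i -> 0 <= f i) ->
  \esum_(i in S) (a%:E * f i) = a%:E * \esum_(i in S) f i.
Proof.
move=> a0 f0; rewrite /esum -ereal_supZl //; last first.
  by apply/set0P; exists 0; exists set0; [exact: fsets_set0|rewrite fsbig_set0].
congr ereal_sup; apply/seteqP; split => x /=.
- move=> [X XS <-]; exists (\sum_(i \in X) f i); first by exists X.
  case: XS => finX XS; rewrite !fsbig_finite// big_seq [in RHS]big_seq.
  rewrite ge0_sume_distrr// => i; rewrite in_fset_set// inE => /XS; exact: f0.
- move=> [y] [X XS <-] <-; exists X => //.
  case: XS => finX XS; rewrite !fsbig_finite// big_seq [in RHS]big_seq.
  rewrite ge0_sume_distrr// => i; rewrite in_fset_set// inE => /XS; exact: f0.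
Qed.

Lemma esumID_seq f {F : seq I} : uniq F -> (forall i, 0 <= f i) ->
  \esum_(i in setT) f i =
  \sum_(i <- F) f i + \esum_(i in setT) (if i \in F then 0 else f i).
Proof.
move=> uF f0; rewrite (esumID [set` F]) // setTI esum_fset ?finite_seq //.
rewrite -fsbig_seq //; congr (_ + _); rewrite esum_mkcond; apply: eq_esum => i _.
by rewrite in_setI in_setT in_setC mem_setE; case: (i \in F).
Qed.

Lemma esum_tail_small {f} {e : R} : (forall i, 0 <= f i) ->
  \esum_(i in setT) f i \is a fin_num -> (0 < e)%R ->
  exists2 F : seq I, uniq F &
    \esum_(i in setT) (if i \in F then 0 else f i) <= e%:E.
Proof.
move=> f0 sum_fin e0.
have : \esum_(i in setT) f i - e%:E < \esum_(i in setT) f i.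
  by rewrite -(fineK sum_fin) -EFinB lte_fin ltrBlDr ltrDl.
rewrite {2}/esum => /ereal_sup_gt [_ [X [finX _] <-]].
rewrite fsbig_finite // => sumX_gt.
set F := finmap.enum_fset _ in sumX_gt; have uF : uniq F := finmap.fset_uniq _.
exists F => //; rewrite (esumID_seq _ uF f0) in sum_fin sumX_gt.
move: sum_fin; rewrite fin_numD => /andP[sumF_fin tail_fin].
move: sumX_gt; rewrite -(fineK sumF_fin) -(fineK tail_fin) -!EFinD.
by rewrite lte_fin lee_fin; lra.
Qed.

End esum_complements.

Section tuple_esum.
Local Open Scope ereal_scope.
Context {R : realType} {T : choiceType}.

Lemma esum_tuple_cons n (f : n.+1.-tuple T -> \bar R) : (forall s, 0 <= f s) ->
  \esum_(s in setT) f s = \esum_(y in setT) \esum_(s in setT) f (cons_tuple y s).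
Proof.
move=> f0; rewrite esum_esum //.
rewrite (reindex_esum (setT `*`` (fun=> setT)) setT
   (fun k : T * n.-tuple T => cons_tuple k.1 k.2)) //.
split=> [k //|[y s] [y' s'] _ _ /(congr1 val) /= [-> /val_inj ->] //|t _].
by case/tupleP: t => y s; exists (y, s).
Qed.

Lemma esum_tuple0 (f : 0.-tuple T -> \bar R) : (forall s, 0 <= f s) ->
  \esum_(s in setT) f s = f [tuple].
Proof.
move=> f0; rewrite (_ : setT = [set [tuple]]) ?esum_set1 //.
by apply/seteqP; split => s // _; apply: val_inj; case: s => -[].
Qed.

End tuple_esum.

(* For a draw Y that equals y \in F with probability q y (and lies outside F
   otherwise), this reads E prod_x (1 + a_x [Y != x]) <= prod_x E (1 + a_x [Y != x]). *)
Lemma prod_except_mix_le {R : realType} {T : eqType} (F : seq T) (a q : T -> R) :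
  uniq F -> (forall x, 0 <= a x) -> (forall x, 0 <= q x <= 1) ->
  \sum_(y <- F) q y * \prod_(x <- F) (1 + a x * (y != x)%:R)
  + (1 - \sum_(y <- F) q y) * \prod_(x <- F) (1 + a x)
  <= \prod_(x <- F) (1 + a x * (1 - q x)).
Proof.
move=> + a0 q01; elim: F => [|z F IH] /=; first by rewrite !big_nil subr0 mulr1 add0r.
move=> /andP[zF uF]; have {}IH := IH uF.
set P := \prod_(x <- F) (1 + a x).
set Pq := \prod_(x <- F) (1 + a x * (1 - q x)).
set S := \sum_(y <- F) q y * \prod_(x <- F) (1 + a x * (y != x)%:R).
have Pq_le : Pq <= P.
  apply: ler_prod => x _; have := q01 x; have := a0 x; move=> ? /andP[? ?].
  by apply/andP; split; nra.
have prod_z : \prod_(x <- z :: F) (1 + a x * (z != x)%:R) = P.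
  rewrite big_cons eqxx mulr0 addr0 mul1r; apply: eq_big_seq => x xF.
  by rewrite (_ : z != x) ?mulr1 //; apply: contraNneq zF => ->.
have sum_F : \sum_(y <- F) q y * \prod_(x <- z :: F) (1 + a x * (y != x)%:R)
    = (1 + a z) * S.
  rewrite /S big_distrr; apply: eq_big_seq => y yF /=.
  rewrite big_cons (_ : y != z) ?mulr1 1?mulrCA //.
  by apply: contraNneq zF => <-.
rewrite big_cons prod_z sum_F !big_cons -/P -/Pq.
have := q01 z; have := a0 z; move=> az /andP[qz0 qz1].
have h1 : 0 <= a z * q z * (P - Pq) by rewrite mulr_ge0 ?mulr_ge0 // subr_ge0.
have h2 : 0 <= (1 + a z) * (Pq - (S + (1 - \sum_(y <- F) q y) * P)).
  by rewrite mulr_ge0 // ?subr_ge0 // addr_ge0.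
nra.
Qed.

Section sampling.
Local Open Scope ereal_scope.
Context {R : realType} {T : countType} {p : T -> R}.
Hypotheses (p_ge0 : forall x, (0 <= p x)%R)
  (p_sum1 : \esum_(x in setT) (p x)%:E = 1).

Lemma esum_prob_notin (F : seq T) : uniq F ->
  \esum_(x in setT) (if x \in F then 0 else (p x)%:E) = (1 - \sum_(x <- F) p x)%:E.
Proof.
move=> uF; move: p_sum1; rewrite (esumID_seq _ uF) => [|x]; last by rewrite lee_fin.
rewrite sumEFin; have : 0 <= \esum_(x in setT) (if x \in F then 0 else (p x)%:E).
  by apply: esum_ge0 => x _; case: ifP; rewrite ?lee_fin.
by case: (\esum_(x in _) _) => [r| |] //= _ [<-]; rewrite addrC addrK.
Qed.

Lemma sum_prob_le1 (F : seq T) : uniq F -> (\sum_(x <- F) p x <= 1)%R.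
Proof.
move=> uF; rewrite -subr_ge0 -lee_fin -esum_prob_notin //.
by apply: esum_ge0 => x _; case: ifP; rewrite ?lee_fin.
Qed.

Lemma prob_le1 x : (p x <= 1)%R.
Proof. by have := sum_prob_le1 [:: x] isT; rewrite big_seq1. Qed.

Lemma avoid_prob01 n x : (0 <= (1 - p x) ^+ n <= 1)%R.
Proof.
have p01 : (0 <= 1 - p x <= 1)%R by rewrite subr_ge0 prob_le1 lerBlDr lerDl p_ge0.
by case/andP: p01 => ? ?; rewrite exprn_ge0 ?exprn_ile1.
Qed.

Lemma exists_prob_gt0 : exists x, (0 < p x)%R.
Proof.
apply: contrapT => /forallNP p_le0; move: p_sum1; rewrite esum1 => [/eqP|x _].
  by rewrite eq_sym onee_eq0.
by apply/eqP; rewrite eqe eq_le p_ge0 andbT leNgt; apply/negP/p_le0.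
Qed.

Lemma seqprob_ge0 n (s : n.-tuple T) : (0 <= seqprob p s)%R.
Proof. exact: prodr_ge0. Qed.

Lemma seqprob_cons n y (s : n.-tuple T) :
  seqprob p (cons_tuple y s) = (p y * seqprob p s)%R.
Proof. by rewrite /seqprob big_cons. Qed.

Lemma le_Exp {n} {f h : n.-tuple T -> \bar R} :
  (forall s, f s <= h s) -> Exp p f <= Exp p h.
Proof.
by move=> fh; apply: le_esum => s _; rewrite lee_wpmul2l ?lee_fin ?seqprob_ge0.
Qed.

Lemma Exp_ge0 n (f : n.-tuple T -> \bar R) : (forall s, 0 <= f s) -> 0 <= Exp p f.
Proof.
by move=> f0; apply: esum_ge0 => s _; rewrite mule_ge0 ?lee_fin ?seqprob_ge0.
Qed.

Lemma ExpZl n (a : R) (f : n.-tuple T -> \bar R) : (0 <= a)%R ->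
  (forall s, 0 <= f s) -> Exp p (fun s => a%:E * f s) = a%:E * Exp p f.
Proof.
move=> a0 f0; rewrite /Exp -esumZl => [|//|s _]; last first.
  by rewrite mule_ge0 ?lee_fin ?seqprob_ge0.
by apply: eq_esum => s _; rewrite muleCA.
Qed.

Lemma Exp_sum n {I : choiceType} (F : seq I) (f : I -> n.-tuple T -> \bar R) :
  (forall i s, 0 <= f i s) ->
  Exp p (fun s => \sum_(i <- F) f i s) = \sum_(i <- F) Exp p (f i).
Proof.
move=> f0; rewrite /Exp.
under eq_esum do rewrite ge0_sume_distrr ?lee_fin ?seqprob_ge0 //.
by rewrite esum_sum // => s i _ _; rewrite mule_ge0 ?lee_fin ?seqprob_ge0.
Qed.

Lemma Exp_tuple0 (f : 0.-tuple T -> \bar R) : (forall s, 0 <= f s) ->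
  Exp p f = f [tuple].
Proof.
move=> f0; rewrite /Exp esum_tuple0 => [|s]; last first.
  by rewrite mule_ge0 ?lee_fin ?seqprob_ge0.
by rewrite /seqprob big_nil mul1e.
Qed.

Lemma Exp_cons n (f : n.+1.-tuple T -> \bar R) : (forall s, 0 <= f s) ->
  Exp p f = \esum_(y in setT) ((p y)%:E * Exp p (fun s => f (cons_tuple y s))).
Proof.
move=> f0; rewrite /Exp esum_tuple_cons => [|s]; last first.
  by rewrite mule_ge0 ?lee_fin ?seqprob_ge0.
apply: eq_esum => y _; rewrite -esumZl => [|//|s _]; last first.
  by rewrite mule_ge0 ?lee_fin ?seqprob_ge0.
by apply: eq_esum => s _; rewrite seqprob_cons EFinM muleA.
Qed.

Lemma occ_cons_eq0 n y (s : n.-tuple T) x :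
  (occ (cons_tuple y s) x == 0%N) = (y != x) && (occ s x == 0%N).
Proof. by rewrite /occ /= addn_eq0 eqb0. Qed.

Lemma Exp_occ_eq0 n x :
  Exp p (fun s : n.-tuple T => ((occ s x == 0%N)%:R)%:E) = ((1 - p x) ^+ n)%:E.
Proof.
elim: n => [|n IH]; first by rewrite Exp_tuple0 // lee_fin.
rewrite Exp_cons => [|s]; last by rewrite lee_fin.
have Exp_y y : Exp p (fun s : n.-tuple T => ((occ (cons_tuple y s) x == 0%N)%:R)%:E) =
    ((y != x)%:R)%:E * ((1 - p x) ^+ n)%:E.
  rewrite -IH -ExpZl => [|//|s]; last by rewrite lee_fin.
  by congr Exp; apply: funext => s; rewrite occ_cons_eq0 -mulnb natrM EFinM.
under eq_esum do rewrite Exp_y.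
transitivity (\esum_(y in setT)
    (((1 - p x) ^+ n)%:E * (if y \in [:: x] then 0 else (p y)%:E))).
  apply: eq_esum => y _; rewrite mem_seq1 muleCA.
  by case: eqP => _; rewrite /= ?mul0e ?mule0 // mul1e muleC.
rewrite esumZl => [||y _]; last by case: ifP; rewrite ?lee_fin.
- by rewrite esum_prob_notin // big_seq1 -EFinM exprSr.
- by case/andP: (avoid_prob01 n x).
Qed.

Lemma esum_prod_except_le (F : seq T) (a : T -> R) : uniq F ->
  (forall x, (0 <= a x)%R) ->
  \esum_(y in setT) (p y * \prod_(x <- F) (1 + a x * (y != x)%:R))%:E
  <= (\prod_(x <- F) (1 + a x * (1 - p x)))%:E.
Proof.
move=> uF a0; have prod_ge0 (b : T -> R) : (forall x, 0 <= b x)%R ->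
    (0 <= \prod_(x <- F) (1 + b x))%R.
  by move=> b0; apply: prodr_ge0 => x _; rewrite addr_ge0.
rewrite (esumID_seq _ uF) => [|y]; last first.
  by rewrite lee_fin mulr_ge0 // prod_ge0 // => x; rewrite mulr_ge0.
rewrite (_ : \esum_(y in _) _ = (\prod_(x <- F) (1 + a x))%R%:E *
    \esum_(y in setT) (if y \in F then 0 else (p y)%:E)); last first.
  rewrite -esumZl => [||y _]; [|exact: prod_ge0|by case: ifP; rewrite ?lee_fin].
  apply: eq_esum => y _; case: ifPn => yF; first by rewrite mule0.
  rewrite -EFinM mulrC; congr (_ * _)%R%:E; apply: eq_big_seq => x xF.
  by rewrite (_ : y != x) ?mulr1 //; apply: contraNneq yF => ->.
rewrite esum_prob_notin // sumEFin -EFinM -EFinD lee_fin mulrC.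
by apply: prod_except_mix_le => // x; rewrite p_ge0 prob_le1.
Qed.

(* The indicators of {F_x = 0} are negatively associated: condition on the
   first sample and use [esum_prod_except_le]. *)
Lemma Exp_prod_occ_eq0_le n (c : T -> R) (F : seq T) : uniq F ->
  (forall x, (0 <= c x)%R) ->
  Exp p (fun s : n.-tuple T => (\prod_(x <- F) (1 + c x * (occ s x == 0%N)%:R))%:E)
  <= (\prod_(x <- F) (1 + c x * (1 - p x) ^+ n))%:E.
Proof.
move=> uF; elim: n c => [|n IH] c c0.
  rewrite Exp_tuple0 => [|s]; last first.
    by rewrite lee_fin prodr_ge0 // => x _; rewrite addr_ge0 // mulr_ge0.
  rewrite lee_fin le_eqVlt; apply/orP; left; apply/eqP.
  by apply: eq_bigr => x _; rewrite expr0.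
rewrite Exp_cons => [|s]; last first.
  by rewrite lee_fin prodr_ge0 // => x _; rewrite addr_ge0 // mulr_ge0.
have cmu0 x : (0 <= c x * (1 - p x) ^+ n)%R.
  by rewrite mulr_ge0 //; case/andP: (avoid_prob01 n x).
apply: le_trans (_ : \esum_(y in setT)
    (p y * \prod_(x <- F) (1 + c x * (1 - p x) ^+ n * (y != x)%:R))%:E <= _).
  apply: le_esum => y _; rewrite EFinM lee_wpmul2l ?lee_fin //.
  rewrite (eq_bigr (fun x => 1 + c x * (y != x)%:R * (1 - p x) ^+ n)%R); last first.
    by move=> x _; rewrite mulrAC.
  have c'0 x : (0 <= c x * (y != x)%:R)%R by rewrite mulr_ge0.
  apply: le_trans (IH _ c'0); rewrite le_eqVlt; apply/orP; left; apply/eqP.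
  congr Exp; apply: funext => s; congr (_%:E); apply: eq_bigr => x _.
  by rewrite occ_cons_eq0 -mulnb natrM mulrA.
apply: le_trans (esum_prod_except_le _ _ uF cmu0) _.
rewrite lee_fin le_eqVlt; apply/orP; left; apply/eqP.
by apply: eq_bigr => x _; rewrite exprSr mulrA.
Qed.

Section occupancy.
Context {g : R -> R} {n : nat}.
Hypothesis g_ge0 : forall q : R, (0 <= q <= 1)%R -> (0 <= g q)%R.

Let gp_ge0 x : (0 <= g (p x))%R.
Proof. by rewrite g_ge0 // p_ge0 prob_le1. Qed.

Let tail (F : seq T) := \esum_(x in setT) (if x \in F then 0 else (g (p x))%:E).

Lemma G0_ge0 s : 0 <= G0 g p n s.
Proof. by apply: esum_ge0 => x _; rewrite lee_fin mulr_ge0. Qed.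

Lemma G0_le_sum_tail (F : seq T) (s : n.-tuple T) : uniq F ->
  G0 g p n s <= (\sum_(x <- F) g (p x) * (occ s x == 0%N)%:R)%:E + tail F.
Proof.
move=> uF; rewrite /G0 (esumID_seq _ uF) => [|x]; last by rewrite lee_fin mulr_ge0.
rewrite sumEFin leeD2l // le_esum // => x _; case: ifP => // _.
by rewrite lee_fin ler_piMr //; case: (_ == _).
Qed.

Lemma Exp_G0_ge_sum (F : seq T) : uniq F ->
  (\sum_(x <- F) g (p x) * (1 - p x) ^+ n)%:E <= Exp p (G0 g p n).
Proof.
move=> uF.
have G0_ge s : \sum_(x <- F) (g (p x) * (occ s x == 0%N)%:R)%:E <= G0 g p n s.
  rewrite /G0 (esumID_seq _ uF) => [|x]; last by rewrite lee_fin mulr_ge0.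
  by rewrite leeDl // esum_ge0 // => x _; case: ifP; rewrite ?lee_fin ?mulr_ge0.
apply: le_trans _ (le_Exp G0_ge); rewrite Exp_sum => [|x s]; last first.
  by rewrite lee_fin mulr_ge0.
rewrite -sumEFin; apply: lee_sum => x _.
rewrite EFinM -Exp_occ_eq0 -ExpZl => [||s]; last by rewrite lee_fin.
- by apply: le_Exp => s; rewrite EFinM.
- exact: gp_ge0.
Qed.

(* The sample x0 x0 ... x0 has positive probability and misses every x != x0. *)
Lemma esum_gp_fin_num : Exp p (G0 g p n) \is a fin_num ->
  \esum_(x in setT) (g (p x))%:E \is a fin_num.
Proof.
move=> EG0_fin; have [x0 px0_gt0] := exists_prob_gt0.
pose s0 := nseq_tuple n x0.
have s0_gt0 : (0 < seqprob p s0)%R.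
  by rewrite /seqprob big_seq prodr_gt0 // => y; rewrite mem_nseq => /andP[_ /eqP ->].
have G0_s0_fin : G0 g p n s0 \is a fin_num.
  have : (seqprob p s0)%:E * G0 g p n s0 <= Exp p (G0 g p n).
    apply: esum_ge; exists [set s0]; first by split; [exact: finite_set1|].
    by rewrite fsbig_set1.
  rewrite ge0_fin_numE ?G0_ge0 // ltey; apply: contraTN => /eqP ->.
  by rewrite gt0_muley ?lte_fin // leye_eq; apply: contraTN EG0_fin => /eqP ->.
have tail_le : tail [:: x0] <= G0 g p n s0.
  apply: le_esum => x _; rewrite mem_seq1; case: eqP => [_|/eqP x_neq].
    by rewrite lee_fin mulr_ge0.
  by rewrite /occ count_nseq /= [x0 == x]eq_sym (negPf x_neq) mul0n mulr1.
rewrite ge0_fin_numE ?esum_ge0 // => [|x _]; last by rewrite lee_fin.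
rewrite (esumID_seq _ (isT : uniq [:: x0])) => [|x]; last by rewrite lee_fin.
rewrite big_seq1 (le_lt_trans (leeD2l _ tail_le)) //.
by rewrite -(fineK G0_s0_fin) -EFinD ltry.
Qed.

Lemma Exp_expeR_G0_le {lam t : R} {F : seq T} : (0 < lam)%R -> uniq F ->
  Exp p (G0 g p n) \is a fin_num -> tail F = t%:E ->
  Exp p (fun s => expeR (lam%:E * (G0 g p n s - Exp p (G0 g p n)))) <=
  (expR (lam * (t - fine (Exp p (G0 g p n)))) *
    \prod_(x <- F) (1 + (expR (lam * g (p x)) - 1) * (1 - p x) ^+ n))%:E.
Proof.
move=> lam_gt0 uF /fineK mean_fin tailE.
set M := fine _ in mean_fin *; rewrite -mean_fin.
set c := fun x => (expR (lam * g (p x)) - 1)%R.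
have c0 x : (0 <= c x)%R by rewrite subr_ge0 -expR0 ler_expR mulr_ge0 // ltW.
pose GF (s : n.-tuple T) := (\sum_(x <- F) g (p x) * (occ s x == 0%N)%:R)%R.
have expR_GF s : (expR (lam * (GF s + t - M)) =
    expR (lam * (t - M)) * \prod_(x <- F) (1 + c x * (occ s x == 0%N)%:R))%R.
  rewrite (_ : lam * _ = lam * (t - M) + \sum_(x <- F) lam * (g (p x) *
      (occ s x == 0%N)%:R))%R; last by rewrite /GF -mulr_sumr; ring.
  rewrite expRD expR_sum; congr (_ * _)%R; apply: eq_bigr => x _.
  by case: (_ == _); rewrite ?mulr1 ?mulr0 ?expR0 ?addr0 // addrC subrK.
apply: le_trans (_ : Exp p (fun s => (expR (lam * (t - M)))%:E *
    (\prod_(x <- F) (1 + c x * (occ s x == 0%N)%:R))%:E) <= _).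
  apply: le_Exp => s; rewrite -EFinM -expR_GF.
  have G0_le : G0 g p n s <= (GF s)%:E + t%:E by rewrite -tailE G0_le_sum_tail.
  rewrite -[X in _ <= X]/(expeR (lam * (GF s + t - M))%:E) lee_expeR.
  rewrite EFinM !EFinB EFinD.
  by apply: lee_wpmul2l; [rewrite lee_fin ltW | rewrite leeD2r].
rewrite ExpZl // => [|s]; last first.
  by rewrite lee_fin prodr_ge0 // => x _; rewrite addr_ge0 // mulr_ge0.
by rewrite EFinM lee_wpmul2l // Exp_prod_occ_eq0_le.
Qed.

Lemma LG0_le_tail {lam t : R} {F : seq T} : (0 < lam)%R -> uniq F ->
  Exp p (G0 g p n) \is a fin_num -> tail F = t%:E ->
  LG0 g p n lam <=
    (lam * t)%:E + \sum_(2 <= r <oo) ((lam ^+ r / r`!%:R)%:E * ustar r n g).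
Proof.
move=> lam_gt0 uF EG0_fin tailE.
have := Exp_expeR_G0_le lam_gt0 uF EG0_fin tailE; rewrite /LG0.
set M := fine _; set C := (expR _ * _)%R => Exp_le.
set mu := fun x => ((1 - p x) ^+ n)%R.
set z := (lam * (t - M) + \sum_(x <- F) ln (1 + (expR (lam * g (p x)) - 1) * mu x))%R.
have C_z : C = expR z.
  rewrite /z expRD expR_sum; congr (_ * _)%R; apply: eq_bigr => x _.
  have /andP[mu0 _] := avoid_prob01 n x.
  rewrite lnK // posrE (lt_le_trans ltr01) // lerDl mulr_ge0 //.
  by rewrite subr_ge0 -expR0 ler_expR mulr_ge0 // ltW.
apply: le_trans (_ : lne C%:E <= _).
  rewrite lee_lne // in_itv /= ?leey ?andbT ?Exp_ge0 // => [s|]; first exact: expeR_ge0.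
  by rewrite C_z lee_fin ltW ?expR_gt0.
rewrite C_z lne_EFin ?expR_gt0 // expRK.
have sum_le_M : (\sum_(x <- F) g (p x) * mu x <= M)%R.
  by rewrite -lee_fin /M fineK //; exact: Exp_G0_ge_sum.
have sum_ln_le : (\sum_(x <- F) ln (1 + (expR (lam * g (p x)) - 1) * mu x) <=
    lam * \sum_(x <- F) g (p x) * mu x +
    \sum_(x <- F) mu x * (1 - mu x) * expR_rem2 (lam * g (p x)))%R.
  rewrite mulr_sumr -big_split /=; apply: ler_sum => x _.
  by rewrite mulrA ln_mix_le ?avoid_prob01 // mulr_ge0 // ltW.
apply: le_trans (_ : (lam * t + \sum_(x <- F) mu x * (1 - mu x) *
    expR_rem2 (lam * g (p x)))%:E <= _).
  by rewrite lee_fin /z; have := ler_wpM2l (ltW lam_gt0) sum_le_M; lra.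
rewrite EFinD leeD2l //; apply: sum_var_expR_rem2_le => //.
- by move=> x; rewrite p_ge0 prob_le1.
- exact: sum_prob_le1.
Qed.

End occupancy.

End sampling.

Theorem lemma5 (R : realType) (T : countType) (p : T -> R) (g : R -> R) (n : nat)
  (p_ge0 : forall x, 0 <= p x)
  (p_sum1 : (\esum_(x in setT) (p x)%:E = 1)%E)
  (g_ge0 : forall q : R, 0 <= q <= 1 -> 0 <= g q)
  (EG0_fin : Exp p (G0 g p n) \is a fin_num)
  (lam : R) (lam_gt0 : 0 < lam) :
  (LG0 g p n lam <=
     \sum_(2 <= r <oo) ((lam ^+ r / (r`!)%:R)%:E * ustar r n g))%E.
Proof.
have gp_ge0 x : (0 <= (g (p x))%:E)%E by rewrite lee_fin g_ge0 // p_ge0 prob_le1.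
have g_fin := esum_gp_fin_num p_ge0 p_sum1 g_ge0 EG0_fin.
apply/lee_addgt0Pr => e e_gt0.
have [F uF tail_le] := esum_tail_small gp_ge0 g_fin (divr_gt0 e_gt0 lam_gt0).
have tail_fin : (\esum_(x in setT) (if x \in F then 0 else (g (p x))%:E))%E
    \is a fin_num.
  by rewrite ge0_fin_numE ?(le_lt_trans tail_le) ?ltry // esum_ge0 // => x _; case: ifP.
apply: le_trans (LG0_le_tail p_ge0 p_sum1 g_ge0 lam_gt0 uF EG0_fin
  (esym (fineK tail_fin))) _.
rewrite addeC; apply: leeD => //.
by rewrite lee_fin mulrC -ler_pdivlMr // -lee_fin fineK.
Qed.
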